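(* Let $n,a,t\in\mathbb N$ with $t<a<n$. Let $\mathcal F,\mathcal G\subseteq\binom{[n]}{a}$ be such that $L_{t+1}(G)\not\preceq_{t+1}R_{t+1}(F)$ for all $F\in\mathcal F$, $G\in\mathcal G$. Let $\mathbf X$ and $\mathbf Y$ be independent random subsets of $[n]$, each distributed according to $\mu_{a/n}$. Then $$\Pr[\mathbf X\in\mathcal F,\ \mathbf Y\in\mathcal G]\le 4n\cdot\exp\left(-(a-t-1)^2/(20a)\right).$$
   Context: $[n]=\{1,\dots,n\}$, $\binom{[n]}{l}$ is the family of $l$-element subsets of $[n]$. For $X\subseteq[n]$ and $1\le i\le|X|$, $m(X,i)$ is the $i$-th smallest element of $X$. For $l\in[n]$, the partial order $\preceq_l$ on $\binom{[n]}{l}$ is defined by $X\preceq_l Y$ iff $m(X,i)\le m(Y,i)$ for all $1\le i\le l$. For $X\in\binom{[n]}{a}$ and $j\le a$, $L_j(X)$ is the set of the $j$ smallest elements of $X$ and $R_j(X)$ the set of the $j$ largest elements of $X$. For $p\in[0,1]$, $\mu_p$ is the probability measure on subsets of $[n]$ giving $X\subseteq[n]$ probability $p^{|X|}(1-p)^{n-|X|}$ (each element included independently with probability $p$). *)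

From HB Require Import structures.
From mathcomp Require Import all_boot all_order all_algebra.
From mathcomp Require Import all_classical all_reals all_analysis.
Set Implicit Arguments. Unset Strict Implicit. Unset Printing Implicit Defensive.
Import Order.TTheory GRing.Theory Num.Theory.

(* Ground set [n] = {1,..,n} is represented by 'I_n = {0,..,n-1}
   (shift by one; order-preserving, so m(X,i), L_j, R_j, preceq are unaffected). *)

Section Defs.
Variable n : nat.

Definition sorted_elems (X : {set 'I_n}) : seq nat :=
  sort leq [seq val x | x <- enum X].

Definition m_ (X : {set 'I_n}) (i : nat) : nat := nth 0 (sorted_elems X) i.-1.

Definition Lset (j : nat) (X : {set 'I_n}) : {set 'I_n} :=
  [set x in X | index (val x) (sorted_elems X) < j].

Definition Rset (j : nat) (X : {set 'I_n}) : {set 'I_n} :=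
  [set x in X | #|X| - j <= index (val x) (sorted_elems X)].

Definition preceq (l : nat) (X Y : {set 'I_n}) : bool :=
  [forall i : 'I_l, m_ X i.+1 <= m_ Y i.+1].

Definition mu {R : pzRingType} (p : R) (X : {set 'I_n}) : R :=
  p ^+ #|X| * (1 - p) ^+ (n - #|X|).

Definition joint_prob {R : pzRingType} (p : R) (F G : {set {set 'I_n}}) : R :=
  \sum_(XY in finset.setX F G) mu p XY.1 * mu p XY.2.
End Defs.

From HB Require Import structures.
From mathcomp Require Import all_boot all_order all_algebra.
From mathcomp Require Import all_classical all_reals all_analysis.
From mathcomp Require Import lra zify ring.
Import Order.TTheory GRing.Theory Num.Theory.

Set Implicit Arguments.
Unset Strict Implicit.
Unset Printing Implicit Defensive.

(* If L_{t+1}(Y) is not below R_{t+1}(X) in the order preceq, then for some threshold j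
   the set X has at least a - t more elements <= j than Y.  Hence every pair (X, Y) in
   F x G has weight at least 1 under e^{l (|X cap [0,j]| - |Y cap [0,j]| - (a - t))} for
   some j, and summing these weights over j and over all pairs of sets factorises into
   n products of Bernoulli moment generating functions, each factor at most e^{3 p l^2}.
   The choice l = (a - t - 1) / (4 a) yields the bound. *)

Lemma in_drop_uniq (T : eqType) (s : seq T) m x : uniq s -> x \in s ->
  (x \in drop m s) = (m <= index x s)%N.
Proof.
move=> us xs; rewrite leqNgt -in_take //.
move: us xs; rewrite -[in uniq _](cat_take_drop m s) -[in x \in s](cat_take_drop m s).
rewrite cat_uniq mem_cat => /and3P[_ /hasPn disj _].
by case: (boolP (x \in drop m s)) => [/disj -> | _ /orP[->|]].
Qed.

Lemma count_leq_nth_sorted (s : seq nat) l : sorted leq s -> (l < size s)%N ->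
  (l < count (leq^~ (nth 0 s l)) s)%N.
Proof.
move=> ss ls; rewrite -[X in count _ X](cat_take_drop l.+1 s) count_cat.
have /eqP -> : count (leq^~ (nth 0 s l)) (take l.+1 s) == size (take l.+1 s).
  rewrite -all_count; apply/(all_nthP 0) => i; rewrite size_takel // => il.
  rewrite nth_take //; apply: (sorted_leq_nth leq_trans leqnn) => //; rewrite ?inE; lia.
by rewrite size_takel // leq_addr.
Qed.

Lemma count_leq_lt_nth_sorted (s : seq nat) i v : sorted leq s -> (v < nth 0 s i)%N ->
  (count (leq^~ v) s <= i)%N.
Proof.
move=> ss vi; rewrite -(cat_take_drop i s) count_cat.
have /eqP -> : count (leq^~ v) (drop i s) == 0%N.
  rewrite -leqn0 leqNgt -has_count; apply/(has_nthP 0) => -[l]; rewrite size_drop nth_drop /=.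
  move=> li; rewrite leqNgt (leq_trans vi) //.
  by apply: (sorted_leq_nth leq_trans leqnn) => //; rewrite ?inE; lia.
by rewrite addn0 (leq_trans (count_size _ _)) // size_take_min geq_minl.
Qed.

Section SortedElems.
Variable n : nat.
Implicit Types X Y : {set 'I_n}.

Lemma sorted_elems_sorted X : sorted leq (sorted_elems X).
Proof. exact/sort_sorted/leq_total. Qed.

Lemma sorted_elems_uniq X : uniq (sorted_elems X).
Proof. by rewrite sort_uniq map_inj_uniq ?enum_uniq //; exact: val_inj. Qed.

Lemma mem_sorted_elems X (x : 'I_n) : (val x \in sorted_elems X) = (x \in X).
Proof. by rewrite mem_sort mem_map ?mem_enum //; exact: val_inj. Qed.

Lemma sorted_elems_lt X v : v \in sorted_elems X -> (v < n)%N.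
Proof. by rewrite mem_sort => /mapP[x _ ->]; exact: ltn_ord. Qed.

Lemma size_sorted_elems X : size (sorted_elems X) = #|X|.
Proof. by rewrite size_sort size_map cardE. Qed.

Lemma sorted_elems_eq X s : sorted leq s -> uniq s -> {in s, forall v, (v < n)%N} ->
  (forall x : 'I_n, (x \in X) = (val x \in s)) -> sorted_elems X = s.
Proof.
move=> ss us sn memX.
apply: (sorted_eq leq_trans anti_leq (sorted_elems_sorted X) ss).
apply: uniq_perm (sorted_elems_uniq X) us _ => v.
case: (ltnP v n) => [vn | nv].
  by rewrite -[v]/(val (Ordinal vn)) mem_sorted_elems memX.
apply/idP/idP => [/sorted_elems_lt | /sn /=]; lia.
Qed.

Lemma sorted_elems_Lset j X : sorted_elems (Lset j X) = take j (sorted_elems X).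
Proof.
apply: sorted_elems_eq.
- exact/take_sorted/sorted_elems_sorted.
- exact/take_uniq/sorted_elems_uniq.
- by move=> v /mem_take /sorted_elems_lt.
- move=> x; rewrite inE; case: (boolP (x \in X)) => xX.
    by rewrite in_take // mem_sorted_elems.
  by apply/esym/negP => /mem_take; rewrite mem_sorted_elems (negPf xX).
Qed.

Lemma sorted_elems_Rset j X :
  sorted_elems (Rset j X) = drop (#|X| - j) (sorted_elems X).
Proof.
apply: sorted_elems_eq.
- exact/drop_sorted/sorted_elems_sorted.
- exact/drop_uniq/sorted_elems_uniq.
- by move=> v /mem_drop /sorted_elems_lt.
- move=> x; rewrite inE; case: (boolP (x \in X)) => xX.
    by rewrite in_drop_uniq ?sorted_elems_uniq // mem_sorted_elems.
  by apply/esym/negP => /mem_drop; rewrite mem_sorted_elems (negPf xX).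
Qed.

Definition card_le (j : nat) X := #|[set x in X | (x <= j)%N]|.

Lemma card_le_count j X : card_le j X = count (leq^~ j) (sorted_elems X).
Proof.
rewrite /card_le count_sort count_map cardE /enum_mem size_filter count_filter.
by apply: eq_count => x; rewrite /= !inE andbC.
Qed.

Lemma not_preceq_card_le_gap a t X Y : (t < a)%N -> #|X| = a -> #|Y| = a ->
  ~~ preceq t.+1 (Lset t.+1 Y) (Rset t.+1 X) ->
  exists j : 'I_n, (card_le j Y + (a - t) <= card_le j X)%N.
Proof.
move=> ta cX cY /forallPn[i]; rewrite -ltnNge /m_ /= sorted_elems_Lset sorted_elems_Rset.
rewrite nth_take // nth_drop cX => lt_vu.
have il : (a - t.+1 + i < size (sorted_elems X))%N.
  by rewrite size_sorted_elems cX; have := ltn_ord i; lia.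
have vn := sorted_elems_lt (mem_nth 0 il).
exists (Ordinal vn); rewrite !card_le_count /=.
have := count_leq_nth_sorted (sorted_elems_sorted X) il.
have := count_leq_lt_nth_sorted (sorted_elems_sorted Y) lt_vu.
lia.
Qed.

End SortedElems.

Local Open Scope ring_scope.

Section BernoulliMoments.
Variables (R : comPzRingType) (n : nat).
Implicit Types (p r : R) (X : {set 'I_n}).

Lemma sum_set_prod (h : 'I_n -> bool -> R) :
  \sum_(X : {set 'I_n}) \prod_i h i (i \in X) = \prod_i (h i true + h i false).
Proof.
under [RHS]eq_bigr do rewrite -big_bool.
rewrite bigA_distr_bigA /= (reindex (@finfun_of_set _)) /=; last first.
  by exists (@FinSet _) => [[f] | f].
by apply: eq_bigr => X _; apply: eq_bigr => i _; rewrite unlock.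
Qed.

Lemma mu_prod p X : mu p X = \prod_i (if i \in X then p else 1 - p).
Proof.
rewrite /mu (bigID (mem X)) /=; congr (_ * _).
  by rewrite (eq_bigr (fun=> p)) ?prodr_const // => i ->.
rewrite (eq_bigr (fun=> 1 - p)) => [|i /negPf -> //]; rewrite prodr_const.
have -> : (n - #|X|)%N = #|~: X| by rewrite [RHS]cardsCs finset.setCK card_ord.
by congr (_ ^+ _); apply: eq_card => i; rewrite !inE.
Qed.

Lemma sum_mu_expr_card_le p r (j : nat) :
  \sum_(X : {set 'I_n}) mu p X * r ^+ card_le j X =
  \prod_(i < n) (if (i <= j)%N then p * r + (1 - p) else 1).
Proof.
have expr_card_le X : r ^+ card_le j X = \prod_i (if (i \in X) && (i <= j)%N then r else 1).
  by rewrite -big_mkcond prodr_const; congr (_ ^+ _); apply: eq_card => i; rewrite !inE.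
under eq_bigr do rewrite mu_prod expr_card_le -big_split /=.
rewrite (sum_set_prod (fun i b => (if b then p else 1 - p) * (if b && (i <= j)%N then r else 1))).
apply: eq_bigr => i _.
by case: (i <= j)%N; rewrite /= ?mulr1 // addrC subrK.
Qed.

End BernoulliMoments.

Lemma joint_prob_le_moments (R : realFieldType) n (p r : R) d (F G : {set {set 'I_n}}) :
  0 <= p <= 1 -> 1 <= r ->
  (forall X Y, X \in F -> Y \in G ->
     exists j : 'I_n, (card_le j Y + d <= card_le j X)%N) ->
  joint_prob p F G <=
    \sum_(j < n) \prod_(i < n)
      (if (i <= j)%N then (p * r + (1 - p)) * (p / r + (1 - p)) else 1) / r ^+ d.
Proof.
move=> /andP[p_ge0 p_le1] r_ge1 gap.
have r_gt0 : 0 < r by exact: lt_le_trans r_ge1.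
have mu_ge0 (X : {set 'I_n}) : 0 <= mu p X by rewrite mulr_ge0 ?exprn_ge0 ?subr_ge0.
pose w (j : 'I_n) (X Y : {set 'I_n}) :=
  mu p X * mu p Y * (r ^+ card_le j X / r ^+ (card_le j Y + d)).
have w_ge0 j X Y : 0 <= w j X Y.
  by rewrite /w !(mulr_ge0 (mulr_ge0 (mu_ge0 X) (mu_ge0 Y))) ?divr_ge0 ?exprn_ge0 ?ltW.
have mu_le_w X Y : X \in F -> Y \in G -> mu p X * mu p Y <= \sum_j w j X Y.
  move=> XF YG; have [j gap_j] := gap X Y XF YG.
  rewrite (bigD1 j) //= -[L in L <= _]addr0 lerD ?sumr_ge0 //.
  rewrite -[L in L <= _]mulr1 ler_wpM2l ?(mulr_ge0 (mu_ge0 X)) //.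
  by rewrite ler_pdivlMr ?exprn_gt0 // mul1r ler_weXn2l.
have moments_w j : \sum_(XY : {set 'I_n} * {set 'I_n}) w j XY.1 XY.2 =
  \prod_(i < n) (if (i <= j)%N then (p * r + (1 - p)) * (p / r + (1 - p)) else 1)
    / r ^+ d.
  have w_split X Y : w j X Y =
      mu p X * r ^+ card_le j X * (mu p Y * r^-1 ^+ card_le j Y) / r ^+ d.
    by rewrite /w exprD invfM exprVn; ring.
  rewrite -(pair_bigA _ (w j)) /=.
  under eq_bigr => X _ do under eq_bigr => Y _ do rewrite w_split.
  under eq_bigr => X _ do rewrite -mulr_suml -mulr_sumr.
  rewrite -!mulr_suml !sum_mu_expr_card_le -big_split /=.
  by congr (_ / _); apply: eq_bigr => i _; case: ifP; rewrite ?mulr1.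
rewrite /joint_prob.
apply: (@le_trans _ _ (\sum_(XY in finset.setX F G) \sum_j w j XY.1 XY.2)).
  by apply: ler_sum => -[X Y]; rewrite finset.in_setX => /andP[]; exact: mu_le_w.
rewrite [leRHS](eq_bigr _ (fun j _ => esym (moments_w j))) [leRHS]exchange_big /=.
rewrite [leRHS](bigID (mem (finset.setX F G))) /= lerDl.
by apply: sumr_ge0 => XY _; apply: sumr_ge0 => j _; exact: w_ge0.
Qed.

Lemma expR_add_expRN_le (R : realType) (x : R) : 0 <= x <= 1 / 4 ->
  expR x + expR (- x) <= 2 + 3 * x ^+ 2.
Proof.
move=> /andP[x_ge0 x_le].
have e_inv : expR x * expR (- x) = 1 by rewrite -expRD subrr expR0.
have le_e := expR_ge1Dx x; have le_eN := expR_ge1Dx (- x).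
(* Since [expR x * expR (- x) = 1], the lower bounds [1 -+ x <= expR (-+ x)] turn into upper bounds. *)
have e_le : expR x <= 1 + x + 2 * x ^+ 2.
  have : expR x * (1 - x) <= 1 by rewrite -e_inv ler_pM2l //; lra.
  have : 0 <= x ^+ 2 * (1 - 2 * x) by rewrite mulr_ge0 ?sqr_ge0 //; lra.
  nra.
have eN_le : expR (- x) <= 1 - x + x ^+ 2.
  have : expR (- x) * (1 + x) <= 1 by rewrite -e_inv mulrC ler_pM2r //; lra.
  have : 0 <= x ^+ 3 by rewrite exprn_ge0.
  nra.
lra.
Qed.

Lemma bernoulli_mgf_pair_le (R : realType) (p x : R) : 0 <= p <= 1 -> 0 <= x <= 1 / 4 ->
  (p * expR x + (1 - p)) * (p / expR x + (1 - p)) <= expR (3 * p * x ^+ 2).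
Proof.
move=> /andP[p_ge0 p_le1] x_bnd.
have e_inv : expR x * expR (- x) = 1 by rewrite -expRD subrr expR0.
have cosh_ge : 2 <= expR x + expR (- x).
  by have := expR_ge1Dx x; have := expR_ge1Dx (- x); lra.
have cosh_le := expR_add_expRN_le x_bnd.
apply: le_trans (expR_ge1Dx _).
rewrite -expRN.
have -> : (p * expR x + (1 - p)) * (p * expR (- x) + (1 - p)) =
    1 + p * (1 - p) * (expR x + expR (- x) - 2).
  apply/eqP; rewrite -subr_eq0; apply/eqP.
  transitivity (p ^+ 2 * (expR x * expR (- x) - 1)); first by ring.
  by rewrite e_inv subrr mulr0.
have : 0 <= p * (1 - p) by rewrite mulr_ge0 ?subr_ge0.
nra.
Qed.

Lemma expR_ge1 (R : realType) (x : R) : 0 <= x -> 1 <= expR x.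
Proof. by move=> x_ge0; apply: le_trans (expR_ge1Dx x); lra. Qed.

Lemma prod_bernoulli_mgf_pair_le (R : realType) n (p x : R) (j : 'I_n) :
  0 <= p <= 1 -> 0 <= x <= 1 / 4 ->
  \prod_(i < n) (if (i <= j)%N then (p * expR x + (1 - p)) * (p / expR x + (1 - p)) else 1)
    <= expR (3 * (n%:R * p) * x ^+ 2).
Proof.
move=> p01 x_bnd; have /andP[p_ge0 p_le1] := p01; have /andP[x_ge0 _] := x_bnd.
have -> : 3 * (n%:R * p) * x ^+ 2 = n%:R * (3 * p * x ^+ 2) by ring.
rewrite expRM_natl -[n in _ ^+ n]card_ord -prodr_const.
apply: ler_prod => i _; case: ifP => _.
  rewrite bernoulli_mgf_pair_le // andbT.
  by rewrite mulr_ge0 // addr_ge0 ?subr_ge0 ?mulr_ge0 ?divr_ge0 ?expR_ge0.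
by rewrite ler01 expR_ge1 // !mulr_ge0 ?sqr_ge0.
Qed.

Lemma expR_chernoff_le (R : realType) (a : R) (k : nat) : 0 < a ->
  expR (3 * a * (k%:R / (4 * a)) ^+ 2) / expR (k%:R / (4 * a)) ^+ k.+1
    <= expR (- (k%:R ^+ 2 / (20 * a))).
Proof.
move=> a_gt0; rewrite -expRM_natl -expRN -expRD ler_expR -[k.+1%:R]natr1 -subr_ge0.
set c : R := k%:R.
have -> : - (c ^+ 2 / (20 * a)) - (3 * a * (c / (4 * a)) ^+ 2 - (c + 1) * (c / (4 * a))) =
    (c ^+ 2 + 20 * c) / (80 * a).
  by field; rewrite gt_eqF.
by apply: divr_ge0; have := ler0n R k; nra.
Qed.

Unset Implicit Arguments.

Theorem lemma4 (R : realType) (n a t : nat) (hta : (t < a)%N) (han : (a < n)%N)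
  (F G : {set {set 'I_n}})
  (hF : forall X, X \in F -> #|X| = a)
  (hG : forall Y, Y \in G -> #|Y| = a)
  (hFG : forall X Y, X \in F -> Y \in G ->
     ~~ preceq t.+1 (Lset t.+1 Y) (Rset t.+1 X)) :
  joint_prob ((a%:R : R) / n%:R) F G <=
    4 * n%:R * expR (- (((a - t - 1)%:R) ^+ 2 / (20 * a%:R))).
Proof.
set p : R := a%:R / n%:R; set k := (a - t - 1)%N; set lam : R := k%:R / (4 * a%:R).
have a_gt0 : (0 : R) < a%:R by rewrite ltr0n; lia.
have np : n%:R * p = a%:R by rewrite mulrC divfK // gt_eqF // ltr0n; lia.
have p01 : 0 <= p <= 1.
  by rewrite divr_ge0 ?ler0n //= ler_pdivrMr ?ltr0n ?mul1r ?ler_nat; lia.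
have lam_bnd : 0 <= lam <= 1 / 4.
  have : (k%:R : R) <= a%:R by rewrite ler_nat; lia.
  by rewrite divr_ge0 ?mulr_ge0 ?ler0n //= ler_pdivrMr ?mulr_gt0 //; lra.
have gap X Y : X \in F -> Y \in G ->
    exists j : 'I_n, (card_le j Y + k.+1 <= card_le j X)%N.
  move=> XF YG; rewrite (_ : k.+1 = a - t)%N; last by lia.
  exact: not_preceq_card_le_gap (hF X XF) (hG Y YG) (hFG X Y XF YG).
have lam_ge0 : 0 <= lam by case/andP: lam_bnd.
apply: (le_trans (joint_prob_le_moments p01 (expR_ge1 lam_ge0) gap)).
apply: (@le_trans _ _ (\sum_(j < n) expR (3 * a%:R * lam ^+ 2) / expR lam ^+ k.+1)).
  apply: ler_sum => j _; rewrite ler_wpM2r ?invr_ge0 ?exprn_ge0 ?expR_ge0 // -np.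
  exact: prod_bernoulli_mgf_pair_le.
rewrite sumr_const card_ord -[_ *+ n]mulr_natl -[leRHS]mulrA.
apply: le_trans (ler_wpM2l (ler0n _ n) (expR_chernoff_le k a_gt0)) _.
by rewrite ler_peMl ?mulr_ge0 ?ler0n ?expR_ge0 //; lra.
Qed.
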